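(* Let $P_n$ denote the path on $n$ vertices. Then for every $n\ge 3$, $f(P_n)=\left\lfloor\frac{n}{2}\right\rfloor$.
   Context: For a graph $G$, a family $\mathcal{P}$ of subsets of $E(G)$ is a separating path system of $G$ if every member is (the edge set of) a path in $G$ and for every pair of distinct edges $e,e'$ some $P\in\mathcal{P}$ contains exactly one of $e,e'$; $f(G)$ is the minimum size of a separating path system of $G$. *)

From mathcomp Require Import all_boot.
Set Implicit Arguments. Unset Strict Implicit. Unset Printing Implicit Defensive.

(* A (simple) graph on a finite vertex type T is given by a symmetric,
   irreflexive adjacency relation g.  An edge is the 2-element vertex set
   {x, y} with g x y. *)
Definition edges (T : finType) (g : rel T) : {set {set T}} :=
  [set [set p.1; p.2] | p in [pred p : T * T | g p.1 p.2]].

Definition is_path_edges (T : finType) (g : rel T) (P : {set {set T}}) : Prop :=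
  exists (x : T) (s : seq T),
    [/\ uniq (x :: s), path g x s &
        P = [set [set u.1; u.2] | u in zip (x :: s) s]].

Definition separating_path_system (T : finType) (g : rel T)
    (F : {set {set {set T}}}) : Prop :=
  (forall P, P \in F -> is_path_edges g P) /\
  (forall e e', e \in edges g -> e' \in edges g -> e != e' ->
     exists2 P, P \in F & (e \in P) != (e' \in P)).

Definition f_is (T : finType) (g : rel T) (k : nat) : Prop :=
  (exists F, separating_path_system g F /\ #|F| = k) /\
  (forall F, separating_path_system g F -> k <= #|F|).

Definition path_graph (n : nat) : rel 'I_n :=
  fun i j => (i.+1 == j) || (j.+1 == i).
Arguments path_graph n : clear implicits.

From mathcomp Require Import all_boot zify.
Set Implicit Arguments. Unset Strict Implicit. Unset Printing Implicit Defensive.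

(* A path of P_n uses a run of consecutive edges [a, b), so the vertices at
   which its edge set changes -- its boundary -- are among a and b.  To
   separate the two edges meeting at an inner vertex, some path must have
   that vertex in its boundary; to separate the first edge from the last,
   some path must have an end vertex of P_n in its boundary.  Hence the
   boundaries of a separating system cover n - 1 vertices and 2|F| >= n - 1.
   Conversely, the floor(n/2) windows of floor(n/2) consecutive edges starting
   at 0, 1, ... separate every pair of edges. *)

Lemma leq_card_bigcup (I T : finType) (D : {pred I}) (A : I -> {set T}) :
  #|\bigcup_(i in D) A i| <= \sum_(i in D) #|A i|.
Proof.
elim/big_ind2: _ => [|m X k Y leXm leYk|//]; first by rewrite cards0.
by rewrite (leq_trans (leq_card_setU X Y)) ?leq_add.
Qed.

Section Walks.
Variable T : finType.

Definition walk_edges (w : seq T) : {set {set T}} :=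
  [set [set p.1; p.2] | p in zip w (behead w)].

Lemma mem_walk_edges x0 w e :
  reflect (exists2 i, i.+1 < size w & e = [set nth x0 w i; nth x0 w i.+1])
          (e \in walk_edges w).
Proof.
have size_zip_w : size (zip w (behead w)) = (size w).-1.
  by rewrite size_zip size_behead; lia.
apply: (iffP imsetP) => [[p /(nthP (x0, x0)) [i ltiw <-] ->]|[i ltiw ->]].
  rewrite size_zip_w in ltiw; exists i; first lia.
  by rewrite nth_zip_cond size_zip_w ltiw /= nth_behead.
exists (nth (x0, x0) (zip w (behead w)) i); first by rewrite mem_nth // size_zip_w; lia.
by rewrite nth_zip_cond size_zip_w ifT /= ?nth_behead //; lia.
Qed.

Lemma walk_edges_rev w : walk_edges (rev w) = walk_edges w.
Proof.
case: w => [|x0 w']; first by [].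
have sub (v : seq T) : walk_edges (rev v) \subset walk_edges v.
  apply/subsetP => e /(mem_walk_edges x0) [i]; rewrite size_rev => ltiv ->.
  apply/(mem_walk_edges x0); exists (size v - i.+2); first lia.
  rewrite !nth_rev; [|lia|lia].
  rewrite setUC.
  by have -> : (size v - i.+2).+1 = size v - i.+1 by lia.
by apply/eqP; rewrite eqEsubset sub -[X in walk_edges X \subset _]revK sub.
Qed.

End Walks.

Definition nat_adj : rel nat := fun i j => (i.+1 == j) || (j.+1 == i).

Lemma succ_path_iota x t : path (fun i j => i.+1 == j) x t -> x :: t = iota x (size t).+1.
Proof. by elim: t x => //= y t IHt x /andP[/eqP <- /IHt ->]. Qed.

Lemma uniq_nat_adj_path_monotone x t : uniq (x :: t) -> path nat_adj x t ->
  path (fun i j => i.+1 == j) x t \/ path (fun i j => j.+1 == i) x t.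
Proof.
elim: t x => [|y t IHt] x; first by left.
move=> /andP[x_notin_yt uniq_yt] /andP[adj_xy path_yt].
case: t IHt x_notin_yt uniq_yt path_yt => [|z t] IHt x_notin_yzt uniq_yzt path_yzt.
  by case/orP: adj_xy => /= ->; [left|right].
(* Turning back would revisit x two steps later. *)
have x_neq_z : x != z by apply: contraNneq x_notin_yzt => ->; rewrite !inE eqxx orbT.
case: (IHt y uniq_yzt path_yzt) => /= /andP[yz ->]; rewrite yz !andbT;
  case/orP: adj_xy => xy; rewrite xy; by [left | right | lia].
Qed.

Lemma uniq_nat_adj_path_iota x t : uniq (x :: t) -> path nat_adj x t ->
  exists a, x :: t = iota a (size t).+1 \/ rev (x :: t) = iota a (size t).+1.
Proof.
move=> uniq_xt /(uniq_nat_adj_path_monotone uniq_xt) [/succ_path_iota|pred_xt].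
  by exists x; left.
exists (last x t); right; rewrite lastI rev_rcons.
have /succ_path_iota : path (fun i j => i.+1 == j) (last x t) (rev (belast x t)).
  by rewrite rev_path.
by rewrite size_rev size_belast.
Qed.

Lemma sliding_window_separation m n u v : n <= 2 * m -> u < n -> v < n -> u != v ->
  exists2 j, j < m & (j <= u < j + m) != (j <= v < j + m).
Proof.
move=> le_n_2m; wlog lt_uv : u v / u < v => [wlog_lt ltun ltvn|ltun ltvn _].
  rewrite neq_ltn => /orP[lt_uv|lt_vu]; first by apply: wlog_lt; rewrite // ltn_eqF.
  have [|j ltjm sep] := wlog_lt v u lt_vu ltvn ltun; first by rewrite ltn_eqF.
  by exists j; rewrite // eq_sym.
case: (ltnP v m) => [ltvm|levm]; first by exists v; lia.
case: (ltnP u m) => [ltum|leum]; first by exists 0; lia.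
by exists (u.+1 - m); lia.
Qed.

Section PathGraph.
Variable K : nat.
Local Notation N := K.+1.
Local Notation g := (path_graph N).

Definition edge_at (u : nat) : {set 'I_N} := [set inord u; inord u.+1].

Lemma edge_at_succ (y z : 'I_N) : val z = (val y).+1 -> [set y; z] = edge_at y.
Proof. by move=> zE; rewrite /edge_at -zE !inord_val. Qed.

Lemma edge_at_inj u v : u < K -> v < K -> (edge_at u == edge_at v) = (u == v).
Proof.
move=> ltuK ltvK; apply/eqP/eqP => [uv|-> //].
have : (inord u \in edge_at v) && (inord u.+1 \in edge_at v) by rewrite -uv !inE !eqxx orbT.
by rewrite !inE -!val_eqE /= !inordK //; lia.
Qed.

Lemma edge_at_in_edges u : u < K -> edge_at u \in edges g.
Proof.
move=> ltuK; apply/imsetP; exists (inord u, inord u.+1) => //.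
by rewrite inE /= /path_graph !inordK ?eqxx //; lia.
Qed.

Lemma edges_edge_at e : e \in edges g -> exists2 u, u < K & e = edge_at u.
Proof.
case/imsetP => -[y z]; rewrite inE /= /path_graph => /orP[] /eqP zE ->.
  by exists y; [rewrite -ltnS zE | exact: edge_at_succ].
by exists z; [rewrite -ltnS zE | rewrite setUC; exact: edge_at_succ].
Qed.

Definition has_edge (P : {set {set 'I_N}}) (u : nat) := (u < K) && (edge_at u \in P).

Definition edge_interval P a b := forall u, has_edge P u = (a <= u < b).

Lemma iota_walk_path (w : seq 'I_N) a k :
  map val w = iota a k.+1 -> is_path_edges g (walk_edges w).
Proof.
case: w => [//|x s] wE; exists x, s; split => //.
  by rewrite -(map_inj_uniq val_inj) wE iota_uniq.
change (path (relpre (@nat_of_ord N) nat_adj) x s); rewrite -path_map.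
case: wE => -> ->; elim: k a => //= k IHk a.
by rewrite /nat_adj eqxx IHk.
Qed.

Lemma iota_walk_interval (w : seq 'I_N) a k :
  map val w = iota a k.+1 -> edge_interval (walk_edges w) a (a + k).
Proof.
move=> wE.
have ltakN : a + k < N.
  have /mapP[y _ ->] : a + k \in map val w by rewrite wE mem_iota; lia.
  exact: ltn_ord.
have size_w : size w = k.+1 by rewrite -(size_map val) wE size_iota.
have nthE i : i <= k -> val (nth ord0 w i) = a + i.
  by move=> leik; rewrite -(nth_map ord0 0) ?size_w // wE nth_iota.
have walk_edge_at i : i < k -> [set nth ord0 w i; nth ord0 w i.+1] = edge_at (a + i).
  by move=> ltik; rewrite edge_at_succ nthE ?addnS ?nthE //; exact: ltnW.
move=> u; rewrite /has_edge; apply/idP/idP.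
  case/andP=> ltuK /(mem_walk_edges ord0) [i]; rewrite size_w ltnS => ltik.
  by rewrite walk_edge_at // => /eqP; rewrite edge_at_inj; lia.
move=> /andP[leau ltuak]; apply/andP; split; first lia.
apply/(mem_walk_edges ord0); exists (u - a); first by rewrite size_w; lia.
by rewrite walk_edge_at ?subnKC //; lia.
Qed.

Lemma path_edges_interval P : is_path_edges g P -> exists a b, edge_interval P a b.
Proof.
case=> x [s [uniq_xs path_xs ->]].
change (exists a b, edge_interval (walk_edges (x :: s)) a b).
have [|//|a [inc|dec]] := @uniq_nat_adj_path_iota (val x) (map val s).
- by rewrite -(map_inj_uniq val_inj) in uniq_xs.
- by rewrite path_map.
- by exists a, (a + size s); apply: iota_walk_interval; rewrite size_map in inc.
exists a, (a + size s); rewrite -[walk_edges _]walk_edges_rev.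
by apply: iota_walk_interval; rewrite map_rev; rewrite size_map in dec.
Qed.

(* Edges with index outside [0, K) count as absent, so the two end vertices of
   the graph are treated like the inner ones. *)
Definition boundary (P : {set {set 'I_N}}) : {set 'I_N} :=
  [set v : 'I_N | ((0 < v) && has_edge P v.-1) != has_edge P v].

Lemma card_boundary_interval P a b : edge_interval P a b -> #|boundary P| <= 2.
Proof.
move=> Pab; apply: leq_trans (_ : #|[set (inord a : 'I_N); inord b]| <= 2); last first.
  by rewrite cards2; case: (_ != _).
apply/subset_leq_card/subsetP => v; rewrite !inE !Pab => v_bd.
have /orP[/eqP <-|/eqP <-] : (nat_of_ord v == a) || (nat_of_ord v == b) by lia.
  by rewrite inord_val eqxx.
by rewrite inord_val eqxx orbT.
Qed.

Lemma card_bigcup_boundary (F : {set {set {set 'I_N}}}) :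
  (forall P, P \in F -> is_path_edges g P) -> #|\bigcup_(P in F) boundary P| <= 2 * #|F|.
Proof.
move=> F_paths; rewrite (leq_trans (leq_card_bigcup _ _)) // mulnC -sum_nat_const.
apply: leq_sum => P /F_paths /path_edges_interval [a [b]].
exact: card_boundary_interval.
Qed.

Lemma separating_has_edge F u v : separating_path_system g F ->
  u < K -> v < K -> u != v -> exists2 P, P \in F & has_edge P u != has_edge P v.
Proof.
move=> [_ sepF] ltuK ltvK neq_uv.
have [|||P PF] := sepF (edge_at u) (edge_at v); rewrite ?edge_at_in_edges ?edge_at_inj //.
by exists P; rewrite // /has_edge ltuK ltvK.
Qed.

Lemma cover_all_but_extreme (B : {set 'I_N}) :
  (forall v : 'I_N, 0 < v < K -> v \in B) -> (ord0 \in B) || (ord_max \in B) ->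
  K <= #|B|.
Proof.
move=> interior extreme.
pose w : 'I_N := if ord0 \in B then ord_max else ord0.
suff /subset_leq_card : [set~ w] \subset B by rewrite cardsC1 card_ord.
apply/subsetP => v; rewrite !inE /w.
case: (eqVneq v ord0) => [->|v_neq0]; first by case: ifP; rewrite ?eqxx.
case: (eqVneq v ord_max) => [->|v_neq_max _].
  by move: extreme; case: ifP; rewrite ?eqxx.
apply: interior; rewrite -!val_eqE /= in v_neq0 v_neq_max.
by have := ltn_ord v; lia.
Qed.

Lemma separating_path_system_lb F : 1 < K -> separating_path_system g F ->
  K <= 2 * #|F|.
Proof.
move=> K_gt1 sepF; rewrite (leq_trans _ (card_bigcup_boundary sepF.1)) //.
have in_cover P (v : 'I_N) : P \in F -> ((0 < v) && has_edge P v.-1) != has_edge P v ->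
    v \in \bigcup_(P in F) boundary P.
  by move=> PF v_bd; apply/bigcupP; exists P; rewrite ?inE.
apply: cover_all_but_extreme => [v /andP[v_gt0 ltvK]|].
  have [|||P PF] := @separating_has_edge F v.-1 v sepF; try lia.
  by move=> sep_v; apply: in_cover PF _; rewrite v_gt0.
have [|||P PF sep_ends] := @separating_has_edge F 0 K.-1 sepF; try lia.
case e0: (has_edge P 0) in sep_ends.
  by rewrite (in_cover P ord0) //= e0.
rewrite (in_cover P ord_max) ?orbT //= (ltn_trans _ K_gt1) //.
have -> : has_edge P K = false by rewrite /has_edge ltnn.
by case: (has_edge P K.-1) sep_ends.
Qed.

Definition window (j m : nat) : seq 'I_N := [seq inord i | i <- iota j m.+1].

Lemma val_window j m : j + m < N -> map val (window j m) = iota j m.+1.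
Proof.
move=> ltjmN; rewrite -map_comp map_id_in // => i; rewrite mem_iota => /andP[_ ltij].
by rewrite /= inordK //; lia.
Qed.

Lemma sliding_windows : exists F, separating_path_system g F /\ #|F| <= N %/ 2.
Proof.
set m := N %/ 2.
have valW (j : 'I_m) : map val (window j m) = iota j m.+1.
  by apply: val_window; have := ltn_ord j; rewrite /m; lia.
exists [set walk_edges (window j m) | j : 'I_m]; split; last first.
  by rewrite (leq_trans (leq_imset_card _ _)) ?card_ord.
split=> [_ /imsetP[j _ ->]|e e']; first exact: iota_walk_path (valW j).
move=> /edges_edge_at[u ltuK ->] /edges_edge_at[v ltvK ->]; rewrite edge_at_inj // => neq_uv.
have [|j ltjm sep_uv] := @sliding_window_separation m K u v _ ltuK ltvK neq_uv.
  by rewrite /m; lia.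
exists (walk_edges (window (Ordinal ltjm) m)); first exact: imset_f.
have interval := iota_walk_interval (valW (Ordinal ltjm)).
by move: (interval u) (interval v); rewrite /has_edge ltuK ltvK /= => -> ->.
Qed.

End PathGraph.

Theorem proposition7p2 (n : nat) : 3 <= n -> f_is (path_graph n) (n %/ 2).
Proof.
case: n => [|K] // K_gt1.
have lower F : separating_path_system (path_graph K.+1) F -> K.+1 %/ 2 <= #|F|.
  by move=> /(separating_path_system_lb K_gt1); lia.
have [F [sepF cardF]] := sliding_windows K.
split=> [|F' /lower //]; exists F; split=> //.
by apply/eqP; rewrite eqn_leq cardF lower.
Qed.
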